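(* For every integer $m\ge1$ and every smooth closed immersed planar curve $\gamma$, $$E_m[\gamma]\le\frac1{2m+1}L[\gamma]^{3/2}\|\mathcal K_m\|_{L^2(\gamma)},$$ equivalently $L[\gamma]^{2m+1}E_m[\gamma]\le\frac1{2m+1}L[\gamma]^{2m+5/2}\|\mathcal K_m\|_{L^2(\gamma)}$.
   Context: $s$ arclength, $k$ signed curvature, $k_{s^j}$ its $j$-th arclength derivative, $L[\gamma]$ length, $E_m[\gamma]=\frac12\int_\gamma k_{s^m}^2ds$, $\mathcal K_m=(-1)^{m+1}k_{s^{2m+2}}-\tfrac12 k\,k_{s^m}^2+k\sum_{r=1}^m(-1)^{r+1}k_{s^{m-r}}k_{s^{m+r}}$, and $\|\cdot\|_{L^2(\gamma)}$ is taken with respect to $ds$. *)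

From Stdlib Require Import Reals Lra.
From Coquelicot Require Import Coquelicot.
Open Scope R_scope.

Definition smooth (f : R -> R) : Prop :=
  forall (n : nat) (t : R), ex_derive (Derive_n f n) t.

Definition speed (gx gy : R -> R) (t : R) : R :=
  sqrt (Derive gx t ^ 2 + Derive gy t ^ 2).

Definition closed_immersed_smooth_curve (gx gy : R -> R) (T : R) : Prop :=
  0 < T /\ smooth gx /\ smooth gy /\
  (forall t, gx (t + T) = gx t /\ gy (t + T) = gy t) /\
  (forall t, speed gx gy t <> 0).

Definition d_s (gx gy : R -> R) (f : R -> R) : R -> R :=
  fun t => Derive f t / speed gx gy t.

Fixpoint d_s_n (gx gy : R -> R) (j : nat) (f : R -> R) : R -> R :=
  match j with
  | O => f
  | S j' => d_s gx gy (d_s_n gx gy j' f)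
  end.

Definition curv (gx gy : R -> R) (t : R) : R :=
  (Derive gx t * Derive_n gy 2 t - Derive gy t * Derive_n gx 2 t)
  / speed gx gy t ^ 3.

Definition k_s (gx gy : R -> R) (j : nat) : R -> R := d_s_n gx gy j (curv gx gy).

Definition length (gx gy : R -> R) (T : R) : R := RInt (speed gx gy) 0 T.

Definition int_ds (gx gy : R -> R) (T : R) (f : R -> R) : R :=
  RInt (fun t => f t * speed gx gy t) 0 T.

Definition energy (gx gy : R -> R) (T : R) (m : nat) : R :=
  / 2 * int_ds gx gy T (fun t => k_s gx gy m t ^ 2).

Definition Kop (gx gy : R -> R) (m : nat) (t : R) : R :=
  (-1) ^ (m + 1) * k_s gx gy (2 * m + 2) t
  - / 2 * curv gx gy t * k_s gx gy m t ^ 2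
  + curv gx gy t *
    sum_f 1 m (fun r => (-1) ^ (r + 1) * k_s gx gy (m - r) t * k_s gx gy (m + r) t).

Definition L2norm (gx gy : R -> R) (T : R) (f : R -> R) : R :=
  sqrt (int_ds gx gy T (fun t => f t ^ 2)).

From Stdlib Require Import Reals Lra Lia.
From Coquelicot Require Import Coquelicot.
Open Scope R_scope.

(* Measure positions from gamma(0) and write p = <gamma - gamma(0), nu>,
   q = <gamma - gamma(0), tau>, so that |p| <= L.  The dilation gamma -> e^eps gamma
   multiplies k_{s^j} by e^{-(j+1) eps}, hence E_m by e^{-(2m+1) eps}; since its
   normal velocity is p and K_m is the L^2-gradient of E_m, this gives the identity
   int K_m p ds = (2m+1) E_m, which is verified directly by integrating by parts.
   Cauchy-Schwarz then bounds the left side by ||p|| ||K_m|| <= L^{3/2} ||K_m||. *)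

Lemma le_sqrt_mul_of_amgm (X A B : R) :
  0 <= A -> 0 <= B -> (forall c, 0 < c -> 2 * X <= c * A + B / c) ->
  X <= sqrt A * sqrt B.
Proof.
  intros HA HB amgm.
  destruct (Rle_or_lt X 0) as [HX | HX].
  { assert (0 <= sqrt A * sqrt B) by (apply Rmult_le_pos; apply sqrt_pos). lra. }
  destruct HA as [HA | <-].
  - destruct HB as [HB | <-].
    + assert (sA : 0 < sqrt A) by (apply sqrt_lt_R0; lra).
      assert (sB : 0 < sqrt B) by (apply sqrt_lt_R0; lra).
      specialize (amgm (sqrt B / sqrt A) ltac:(apply Rdiv_lt_0_compat; lra)).
      replace (sqrt B / sqrt A * A + B / (sqrt B / sqrt A)) with (2 * (sqrt A * sqrt B))
        in amgm; [lra |].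
      assert (EA := sqrt_sqrt A ltac:(lra)). assert (EB := sqrt_sqrt B ltac:(lra)).
      set (a := sqrt A) in *. set (b := sqrt B) in *.
      rewrite <- EA, <- EB. field. lra.
    + specialize (amgm (X / A) ltac:(apply Rdiv_lt_0_compat; lra)).
      replace (X / A * A + 0 / (X / A)) with X in amgm by (field; lra).
      lra.
  - specialize (amgm ((B + 1) / X) ltac:(apply Rdiv_lt_0_compat; lra)).
    replace (((B + 1) / X) * 0 + B / ((B + 1) / X)) with (X * (B / (B + 1))) in amgm
      by (field; lra).
    assert (B / (B + 1) < 1) by (apply Rlt_div_l; lra).
    assert (X * (B / (B + 1)) < X * 1) by (apply Rmult_lt_compat_l; lra).
    lra.
Qed.

Lemma RInt_weighted_cauchy_schwarz (f g w : R -> R) (a b : R) :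
  a <= b -> (forall t, a <= t <= b -> 0 <= w t) ->
  ex_RInt (fun t => f t * g t * w t) a b ->
  ex_RInt (fun t => f t ^ 2 * w t) a b -> ex_RInt (fun t => g t ^ 2 * w t) a b ->
  RInt (fun t => f t * g t * w t) a b <=
    sqrt (RInt (fun t => f t ^ 2 * w t) a b) * sqrt (RInt (fun t => g t ^ 2 * w t) a b).
Proof.
  intros Hab Hw Ifg If Ig.
  apply le_sqrt_mul_of_amgm.
  - apply RInt_ge_0; auto. intros t Ht. apply Rmult_le_pos; [nra | apply Hw; lra].
  - apply RInt_ge_0; auto. intros t Ht. apply Rmult_le_pos; [nra | apply Hw; lra].
  - intros c Hc.
    assert (Ic : ex_RInt (fun t => c * (f t ^ 2 * w t)) a b)
      by (apply (ex_RInt_scal (V := R_NormedModule)); auto).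
    assert (Ic' : ex_RInt (fun t => / c * (g t ^ 2 * w t)) a b)
      by (apply (ex_RInt_scal (V := R_NormedModule)); auto).
    apply Rle_trans with (RInt (fun t => c * (f t ^ 2 * w t) + / c * (g t ^ 2 * w t)) a b).
    + rewrite <- (RInt_scal (V := R_CompleteNormedModule) _ _ _ 2) by auto.
      apply RInt_le; auto.
      * apply (ex_RInt_scal (V := R_NormedModule)); auto.
      * apply (ex_RInt_plus (V := R_NormedModule)); auto.
      * intros t Ht. specialize (Hw t ltac:(lra)).
        assert (amgm_pt : 2 * c * (f t * g t) <= c * c * f t ^ 2 + g t ^ 2)
          by (assert (0 <= (c * f t - g t) ^ 2) by apply pow2_ge_0; nra).
        apply Rmult_le_reg_l with c; [lra |].
        change (scal 2 (f t * g t * w t)) with (2 * (f t * g t * w t)).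
        replace (c * (c * (f t ^ 2 * w t) + / c * (g t ^ 2 * w t)))
          with ((c * c * f t ^ 2 + g t ^ 2) * w t) by (field; lra).
        replace (c * (2 * (f t * g t * w t))) with ((2 * c * (f t * g t)) * w t) by ring.
        apply Rmult_le_compat_r; auto.
    + rewrite (RInt_plus (V := R_CompleteNormedModule)) by auto.
      rewrite !(RInt_scal (V := R_CompleteNormedModule)) by auto.
      set (Nf := RInt (fun t => f t ^ 2 * w t) a b).
      set (Ng := RInt (fun t => g t ^ 2 * w t) a b).
      apply Req_le. change (c * Nf + / c * Ng = c * Nf + Ng / c). field. lra.
Qed.

Lemma Rabs_inner_le_norm a b x y : a ^ 2 + b ^ 2 = 1 ->
  Rabs (a * x + b * y) <= sqrt (x ^ 2 + y ^ 2).
Proof.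
  intros Hab. rewrite <- sqrt_Rsqr_abs. apply sqrt_le_1_alt.
  unfold Rsqr. assert (0 <= (a * y - b * x) ^ 2) by apply pow2_ge_0. nra.
Qed.

Lemma sqrt_pow3 x : 0 < x -> sqrt (x ^ 3) = Rpower x (3 / 2).
Proof.
  intros Hx.
  replace (3 / 2) with (1 + / 2) by field. rewrite Rpower_plus, Rpower_1, Rpower_sqrt by lra.
  replace (x ^ 3) with (x ^ 2 * x) by ring.
  rewrite sqrt_mult_alt, sqrt_pow2 by (lra || apply pow2_ge_0). reflexivity.
Qed.

Section ArclengthCalculus.
Variables gx gy : R -> R.

Local Notation ds := (d_s gx gy).

Lemma speed_sqr t : speed gx gy t ^ 2 = Derive gx t ^ 2 + Derive gy t ^ 2.
Proof.
  unfold speed. rewrite <- Rsqr_pow2. apply Rsqr_sqrt.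
  apply Rplus_le_le_0_compat; apply pow2_ge_0.
Qed.

Lemma d_s_ext f g : (forall t, f t = g t) -> forall t, ds f t = ds g t.
Proof. intros Hfg t. unfold d_s. now rewrite (Derive_ext f g). Qed.

Lemma d_s_const c t : ds (fun _ => c) t = 0.
Proof. unfold d_s. rewrite Derive_const. apply Rmult_0_l. Qed.

Lemma d_s_plus f g t : ex_derive f t -> ex_derive g t ->
  ds (fun u => f u + g u) t = ds f t + ds g t.
Proof. intros Hf Hg. unfold d_s. rewrite Derive_plus by auto. unfold Rdiv. ring. Qed.

Lemma d_s_minus f g t : ex_derive f t -> ex_derive g t ->
  ds (fun u => f u - g u) t = ds f t - ds g t.
Proof. intros Hf Hg. unfold d_s. rewrite Derive_minus by auto. unfold Rdiv. ring. Qed.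

Lemma d_s_mult f g t : ex_derive f t -> ex_derive g t ->
  ds (fun u => f u * g u) t = ds f t * g t + f t * ds g t.
Proof. intros Hf Hg. unfold d_s. rewrite Derive_mult by auto. unfold Rdiv. ring. Qed.

Lemma d_s_opp f t : ds (fun u => - f u) t = - ds f t.
Proof. unfold d_s. rewrite Derive_opp. unfold Rdiv. ring. Qed.

Lemma d_s_scal c f t : ds (fun u => c * f u) t = c * ds f t.
Proof. unfold d_s. rewrite Derive_scal. unfold Rdiv. ring. Qed.

Lemma d_s_n_add i j f : d_s_n gx gy (i + j) f = d_s_n gx gy i (d_s_n gx gy j f).
Proof. induction i as [|i IH]; simpl; [reflexivity | now rewrite IH]. Qed.

Lemma int_ds_ext T f g : (forall t, f t = g t) -> int_ds gx gy T f = int_ds gx gy T g.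
Proof. intros Hfg. unfold int_ds. apply RInt_ext. intros t _. now rewrite Hfg. Qed.

End ArclengthCalculus.

Lemma Derive_periodic (h : R -> R) (T : R) :
  (forall t, h (t + T) = h t) -> forall t, Derive h (t + T) = Derive h t.
Proof.
  intros Hh t. unfold Derive. f_equal. apply Lim_ext. intro e.
  replace (t + T + e) with (t + e + T) by ring. now rewrite !Hh.
Qed.

Section ClosedCurve.
Variables (gx gy : R -> R) (T : R).
Hypothesis period_pos : 0 < T.
Hypothesis smooth_gx : smooth gx.
Hypothesis smooth_gy : smooth gy.
Hypothesis periodic_curve : forall t, gx (t + T) = gx t /\ gy (t + T) = gy t.
Hypothesis speed_neq0 : forall t, speed gx gy t <> 0.

Local Notation v := (speed gx gy).
Local Notation ds := (d_s gx gy).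
Local Notation k := (curv gx gy).
Local Notation ks := (k_s gx gy).
Local Notation integral := (int_ds gx gy T).

Lemma speed_pos t : 0 < v t.
Proof.
  pose proof (speed_neq0 t). unfold speed in *.
  pose proof (sqrt_pos (Derive gx t ^ 2 + Derive gy t ^ 2)). lra.
Qed.

Lemma is_derive_speed t :
  is_derive v t ((Derive gx t * Derive_n gx 2 t + Derive gy t * Derive_n gy 2 t) / v t).
Proof.
  pose proof (speed_pos t) as Hv. pose proof (speed_sqr gx gy t) as Hv2.
  unfold speed at 1.
  replace ((Derive gx t * Derive_n gx 2 t + Derive gy t * Derive_n gy 2 t) / v t) with
    (2 * (Derive gx t * Derive_n gx 2 t + Derive gy t * Derive_n gy 2 t)
       / (2 * sqrt (Derive gx t ^ 2 + Derive gy t ^ 2))) by (fold (v t); field; lra).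
  apply (is_derive_sqrt (fun u => Derive gx u ^ 2 + Derive gy u ^ 2));
    [| rewrite <- Hv2; now apply pow_lt].
  auto_derive; [exact (conj (smooth_gx 1%nat t) (conj (smooth_gy 1%nat t) I)) |].
  change (Derive_n gx 2 t) with (Derive (fun u => Derive gx u) t).
  change (Derive_n gy 2 t) with (Derive (fun u => Derive gy u) t).
  ring.
Qed.

Lemma Derive_inv_speed t :
  Derive (fun u => / v u) t =
    - (Derive gx t * Derive_n gx 2 t + Derive gy t * Derive_n gy 2 t) * (/ v t) ^ 3.
Proof.
  pose proof (speed_pos t).
  rewrite Derive_inv; [| eexists; apply is_derive_speed | lra].
  rewrite (is_derive_unique _ _ _ (is_derive_speed t)). field. lra.
Qed.

(* The algebra generated by the derivatives of the coordinates and by 1/|gamma'|.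
   It is closed under d/dt, so its members are smooth and T-periodic. *)
Inductive curve_poly : (R -> R) -> Prop :=
  | cp_Dx n : curve_poly (Derive_n gx n)
  | cp_Dy n : curve_poly (Derive_n gy n)
  | cp_inv_speed : curve_poly (fun t => / v t)
  | cp_const c : curve_poly (fun _ => c)
  | cp_plus f g : curve_poly f -> curve_poly g -> curve_poly (fun t => f t + g t)
  | cp_mult f g : curve_poly f -> curve_poly g -> curve_poly (fun t => f t * g t)
  | cp_ext f g : curve_poly f -> (forall t, f t = g t) -> curve_poly g.

Lemma curve_poly_gx : curve_poly gx.
Proof. exact (cp_Dx 0). Qed.
Lemma curve_poly_gy : curve_poly gy.
Proof. exact (cp_Dy 0). Qed.
Lemma curve_poly_Dx : curve_poly (Derive gx).
Proof. exact (cp_Dx 1). Qed.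
Lemma curve_poly_Dy : curve_poly (Derive gy).
Proof. exact (cp_Dy 1). Qed.

Lemma curve_poly_opp f : curve_poly f -> curve_poly (fun t => - f t).
Proof.
  intros Hf. apply (cp_ext (fun t => -1 * f t)); [apply cp_mult, Hf; apply cp_const | intro; ring].
Qed.

Lemma curve_poly_minus f g : curve_poly f -> curve_poly g -> curve_poly (fun t => f t - g t).
Proof.
  intros Hf Hg. apply (cp_ext (fun t => f t + - g t)); [apply cp_plus, curve_poly_opp | ]; auto.
Qed.

Lemma curve_poly_pow f n : curve_poly f -> curve_poly (fun t => f t ^ n).
Proof.
  intros Hf. induction n as [|n IH]; [exact (cp_const 1) |].
  exact (cp_mult _ _ Hf IH).
Qed.

Lemma curve_poly_div_speed f : curve_poly f -> curve_poly (fun t => f t / v t).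
Proof. intros Hf. exact (cp_mult _ _ Hf cp_inv_speed). Qed.

Lemma curve_poly_sum f n :
  (forall i, curve_poly (f i)) -> curve_poly (fun t => sum_f_R0 (fun i => f i t) n).
Proof.
  intros Hf. induction n as [|n IH]; [apply (cp_ext (f 0%nat)); auto |].
  exact (cp_plus _ _ IH (Hf (S n))).
Qed.

Local Hint Resolve cp_const cp_inv_speed cp_plus cp_mult curve_poly_gx curve_poly_gy
  curve_poly_Dx curve_poly_Dy curve_poly_opp curve_poly_minus curve_poly_pow
  curve_poly_div_speed : curve_poly.

Lemma curve_poly_derive f :
  curve_poly f -> (forall t, ex_derive f t) /\ curve_poly (Derive f).
Proof.
  induction 1 as [n | n | | c | f g _ [Df Pf] _ [Dg Pg] | f g Hf [Df Pf] Hg [Dg Pg]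
                 | f g _ [Df Pf] Hfg].
  - split; [intro; apply smooth_gx | exact (cp_Dx (S n))].
  - split; [intro; apply smooth_gy | exact (cp_Dy (S n))].
  - split.
    + intro t. apply ex_derive_inv; [eexists; apply is_derive_speed | apply speed_neq0].
    + eapply cp_ext; [| intro t; symmetry; apply Derive_inv_speed].
      apply cp_mult; [apply curve_poly_opp, cp_plus; apply cp_mult | apply curve_poly_pow];
        auto using cp_Dx, cp_Dy with curve_poly.
  - split; [intro; apply ex_derive_const |].
    apply (cp_ext (fun _ => 0)); [apply cp_const | intro; symmetry; apply Derive_const].
  - split; [intro; apply (ex_derive_plus (K := R_AbsRing) (V := R_NormedModule)); auto |].
    apply (cp_ext _ _ (cp_plus _ _ Pf Pg)). intro; symmetry; apply Derive_plus; auto.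
  - split; [intro; apply ex_derive_mult; auto |].
    apply (cp_ext _ _ (cp_plus _ _ (cp_mult _ _ Pf Hg) (cp_mult _ _ Hf Pg))).
    intro; symmetry; apply Derive_mult; auto.
  - split; [intro t; apply (ex_derive_ext f); auto |].
    apply (cp_ext _ _ Pf). intro; apply Derive_ext; auto.
Qed.

Lemma curve_poly_ex_derive f : curve_poly f -> forall t, ex_derive f t.
Proof. intros Hf. apply (curve_poly_derive f Hf). Qed.

Lemma curve_poly_Derive f : curve_poly f -> curve_poly (Derive f).
Proof. intros Hf. apply (curve_poly_derive f Hf). Qed.

Lemma curve_poly_continuous f : curve_poly f -> forall t, continuous f t.
Proof.
  intros Hf t. apply (ex_derive_continuous (K := R_AbsRing) (V := R_NormedModule)).
  now apply curve_poly_ex_derive.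
Qed.

Lemma curve_poly_d_s f : curve_poly f -> curve_poly (ds f).
Proof. intros Hf. apply curve_poly_div_speed, curve_poly_Derive, Hf. Qed.

Lemma curve_poly_d_s_n n f : curve_poly f -> curve_poly (d_s_n gx gy n f).
Proof. intros Hf. induction n as [|n IH]; [exact Hf | exact (curve_poly_d_s _ IH)]. Qed.

Lemma curve_poly_curv : curve_poly k.
Proof.
  apply (cp_ext (fun t => (Derive gx t * Derive_n gy 2 t - Derive gy t * Derive_n gx 2 t)
                          * (/ v t) ^ 3)).
  - auto using cp_Dx, cp_Dy with curve_poly.
  - intro t. unfold curv. pose proof (speed_pos t). field. lra.
Qed.

Lemma curve_poly_k_s j : curve_poly (ks j).
Proof. apply curve_poly_d_s_n, curve_poly_curv. Qed.

Lemma curve_poly_speed : curve_poly v.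
Proof.
  apply (cp_ext (fun t => (Derive gx t ^ 2 + Derive gy t ^ 2) * / v t)).
  - auto with curve_poly.
  - intro t. rewrite <- speed_sqr. pose proof (speed_pos t). field. lra.
Qed.

Local Hint Resolve curve_poly_d_s curve_poly_d_s_n curve_poly_curv curve_poly_k_s
  curve_poly_sum curve_poly_speed : curve_poly.

Lemma speed_periodic t : v (t + T) = v t.
Proof.
  unfold speed.
  rewrite (Derive_periodic gx), (Derive_periodic gy); auto; intro; apply periodic_curve.
Qed.

Lemma curve_poly_periodic f : curve_poly f -> forall t, f (t + T) = f t.
Proof.
  induction 1 as [n | n | | c | f g _ IHf _ IHg | f g _ IHf _ IHg | f g _ IHf Hfg].
  - induction n as [|n IH]; [apply periodic_curve | now apply Derive_periodic].
  - induction n as [|n IH]; [apply periodic_curve | now apply Derive_periodic].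
  - intro t. now rewrite speed_periodic.
  - reflexivity.
  - intro t. now rewrite IHf, IHg.
  - intro t. now rewrite IHf, IHg.
  - intro t. now rewrite <- !Hfg.
Qed.

Lemma ex_RInt_curve_poly f a b : curve_poly f -> ex_RInt f a b.
Proof.
  intros Hf. apply (ex_RInt_continuous (V := R_CompleteNormedModule)).
  intros t _. now apply curve_poly_continuous.
Qed.

Lemma ex_RInt_int_ds f : curve_poly f -> ex_RInt (fun t => f t * v t) 0 T.
Proof. intros Hf. apply ex_RInt_curve_poly, cp_mult; [exact Hf | exact curve_poly_speed]. Qed.

Lemma int_ds_plus f g : curve_poly f -> curve_poly g ->
  integral (fun t => f t + g t) = integral f + integral g.
Proof.
  intros Hf Hg. unfold int_ds.
  rewrite (RInt_ext _ (fun t => f t * v t + g t * v t)) by (intros; simpl; ring).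
  rewrite (RInt_plus (V := R_CompleteNormedModule)) by auto using ex_RInt_int_ds.
  reflexivity.
Qed.

Lemma int_ds_scal c f : curve_poly f -> integral (fun t => c * f t) = c * integral f.
Proof.
  intros Hf. unfold int_ds.
  rewrite (RInt_ext _ (fun t => c * (f t * v t))) by (intros; simpl; ring).
  rewrite (RInt_scal (V := R_CompleteNormedModule)) by auto using ex_RInt_int_ds.
  reflexivity.
Qed.

Lemma int_ds_sum f n : (forall i, curve_poly (f i)) ->
  integral (fun t => sum_f_R0 (fun i => f i t) n) = sum_f_R0 (fun i => integral (f i)) n.
Proof.
  intros Hf. induction n as [|n IH]; [reflexivity |].
  simpl. rewrite int_ds_plus, IH; auto with curve_poly.
Qed.

Lemma int_ds_const c : integral (fun _ => c) = c * length gx gy T.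
Proof.
  unfold int_ds, length.
  rewrite (RInt_scal (V := R_CompleteNormedModule)) by apply ex_RInt_curve_poly, curve_poly_speed.
  reflexivity.
Qed.

Lemma int_ds_le f g : curve_poly f -> curve_poly g ->
  (forall t, 0 <= t <= T -> f t <= g t) -> integral f <= integral g.
Proof.
  intros Hf Hg Hfg. unfold int_ds.
  apply RInt_le; [lra | now apply ex_RInt_int_ds | now apply ex_RInt_int_ds |].
  intros t Ht. apply Rmult_le_compat_r; [left; apply speed_pos | apply Hfg; lra].
Qed.

Lemma int_ds_d_s f : curve_poly f -> integral (ds f) = 0.
Proof.
  intros Hf. unfold int_ds, d_s.
  rewrite (RInt_ext _ (Derive f)) by (intros t _; pose proof (speed_pos t); simpl; field; lra).
  rewrite RInt_Derive.
  - rewrite <- (Rplus_0_l T) at 1. rewrite (curve_poly_periodic f Hf). ring.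
  - intros t _. now apply curve_poly_ex_derive.
  - intros t _. now apply curve_poly_continuous, curve_poly_Derive.
Qed.

Lemma int_ds_by_parts f g : curve_poly f -> curve_poly g ->
  integral (fun t => f t * ds g t) = - integral (fun t => ds f t * g t).
Proof.
  intros Hf Hg.
  assert (Hfg := int_ds_d_s (fun t => f t * g t) (cp_mult _ _ Hf Hg)).
  rewrite (int_ds_ext _ _ _ _ (fun t => ds f t * g t + f t * ds g t)) in Hfg
    by (intro; apply d_s_mult; auto using curve_poly_ex_derive).
  rewrite int_ds_plus in Hfg by auto with curve_poly.
  lra.
Qed.

Lemma int_ds_by_parts_n n f g : curve_poly f -> curve_poly g ->
  integral (fun t => f t * d_s_n gx gy n g t) =
    (-1) ^ n * integral (fun t => d_s_n gx gy n f t * g t).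
Proof.
  revert f. induction n as [|n IH]; intros f Hf Hg; [simpl; ring |].
  simpl d_s_n at 1. rewrite int_ds_by_parts, IH by auto with curve_poly.
  replace (d_s_n gx gy n (ds f)) with (d_s_n gx gy (S n) f)
    by (rewrite <- Nat.add_1_r; apply d_s_n_add).
  simpl pow. ring.
Qed.

Lemma int_ds_cauchy_schwarz f g : curve_poly f -> curve_poly g ->
  integral (fun t => f t * g t) <=
    sqrt (integral (fun t => f t ^ 2)) * sqrt (integral (fun t => g t ^ 2)).
Proof.
  intros Hf Hg. unfold int_ds.
  apply RInt_weighted_cauchy_schwarz; [lra | intros; left; apply speed_pos | ..];
    apply ex_RInt_int_ds; auto with curve_poly.
Qed.

Lemma unit_tangent t : ds gx t ^ 2 + ds gy t ^ 2 = 1.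
Proof.
  pose proof (speed_pos t). unfold d_s.
  replace ((Derive gx t / v t) ^ 2 + (Derive gy t / v t) ^ 2)
    with ((Derive gx t ^ 2 + Derive gy t ^ 2) / v t ^ 2) by (field; lra).
  rewrite <- speed_sqr. field. lra.
Qed.

Lemma curv_tangent t : k t = ds gx t * ds (ds gy) t - ds gy t * ds (ds gx) t.
Proof.
  pose proof (speed_pos t). pose proof (smooth_gx 1%nat t). pose proof (smooth_gy 1%nat t).
  assert (ex_derive v t) by (eexists; apply is_derive_speed).
  unfold curv, d_s. rewrite !Derive_div by (auto; lra).
  change (Derive_n gy 2 t) with (Derive (Derive gy) t).
  change (Derive_n gx 2 t) with (Derive (Derive gx) t).
  field. lra.
Qed.

Lemma tangent_orthogonal t : ds gx t * ds (ds gx) t + ds gy t * ds (ds gy) t = 0.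
Proof.
  assert (Hunit : ds (fun u => ds gx u * ds gx u + ds gy u * ds gy u) t = ds (fun _ => 1) t).
  { apply d_s_ext. intro u. rewrite <- (unit_tangent u). ring. }
  rewrite d_s_const, d_s_plus, !d_s_mult in Hunit;
    auto using curve_poly_ex_derive with curve_poly.
  lra.
Qed.

Lemma d_s_tangent_x t : ds (ds gx) t = - k t * ds gy t.
Proof.
  rewrite curv_tangent.
  transitivity ((ds gx t ^ 2 + ds gy t ^ 2) * ds (ds gx) t); [rewrite unit_tangent; ring |].
  pose proof (f_equal (Rmult (ds gx t)) (tangent_orthogonal t)). lra.
Qed.

Lemma d_s_tangent_y t : ds (ds gy) t = k t * ds gx t.
Proof.
  rewrite curv_tangent.
  transitivity ((ds gx t ^ 2 + ds gy t ^ 2) * ds (ds gy) t); [rewrite unit_tangent; ring |].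
  pose proof (f_equal (Rmult (ds gy t)) (tangent_orthogonal t)). lra.
Qed.

Definition normal_coord t := (gy t - gy 0) * ds gx t - (gx t - gx 0) * ds gy t.
Definition tangent_coord t := (gx t - gx 0) * ds gx t + (gy t - gy 0) * ds gy t.

Local Notation p := normal_coord.
Local Notation q := tangent_coord.

Lemma curve_poly_normal_coord : curve_poly p.
Proof. unfold normal_coord. auto 7 with curve_poly. Qed.

Lemma curve_poly_tangent_coord : curve_poly q.
Proof. unfold tangent_coord. auto 7 with curve_poly. Qed.

Local Hint Resolve curve_poly_normal_coord curve_poly_tangent_coord : curve_poly.

Lemma d_s_minus_const f c t : ex_derive f t -> ds (fun u => f u - c) t = ds f t.
Proof. intros Hf. rewrite d_s_minus, d_s_const by auto using ex_derive_const. ring. Qed.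

Lemma d_s_normal_coord t : ds p t = - k t * q t.
Proof.
  unfold normal_coord at 1.
  rewrite d_s_minus, !d_s_mult, !d_s_minus_const, d_s_tangent_x, d_s_tangent_y;
    auto using curve_poly_ex_derive with curve_poly.
  unfold tangent_coord. ring.
Qed.

Lemma d_s_tangent_coord t : ds q t = 1 + k t * p t.
Proof.
  unfold tangent_coord at 1.
  rewrite d_s_plus, !d_s_mult, !d_s_minus_const, d_s_tangent_x, d_s_tangent_y;
    auto using curve_poly_ex_derive with curve_poly.
  unfold normal_coord. rewrite <- (unit_tangent t). ring.
Qed.

Lemma abs_normal_coord_le t : 0 <= t <= T -> Rabs (p t) <= length gx gy T.
Proof.
  intros Ht.
  set (h u := - ds gy t * gx u + ds gx t * gy u).
  assert (Hh : curve_poly h) by (unfold h; auto with curve_poly).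
  assert (Hp : p t = RInt (Derive h) 0 t).
  { rewrite RInt_Derive.
    - unfold normal_coord, h. ring.
    - intros; now apply curve_poly_ex_derive.
    - intros; now apply curve_poly_continuous, curve_poly_Derive. }
  assert (Hdh : forall u, Rabs (Derive h u) <= v u).
  { intro u. unfold h. rewrite Derive_plus, !Derive_scal
      by auto using ex_derive_scal, curve_poly_ex_derive with curve_poly.
    apply Rabs_inner_le_norm. rewrite <- (unit_tangent t). ring. }
  assert (Hv : forall a b, ex_RInt v a b)
    by (intros; apply ex_RInt_curve_poly, curve_poly_speed).
  assert (Hv_ge0 : forall a b, a <= b -> 0 <= RInt v a b).
  { intros a b Hab. apply RInt_ge_0; auto. intros; left; apply speed_pos. }
  rewrite Hp. apply Rle_trans with (RInt v 0 t).
  - assert (Ih : ex_RInt (Derive h) 0 t) by now apply ex_RInt_curve_poly, curve_poly_Derive.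
    eapply Rle_trans; [apply abs_RInt_le; [lra | exact Ih] |].
    apply RInt_le; [lra | now apply (ex_RInt_norm (Derive h)) | auto | intros; apply Hdh].
  - unfold length. rewrite <- (RInt_Chasles (V := R_CompleteNormedModule) v 0 t T) by auto.
    pose proof (Hv_ge0 t T ltac:(lra)). change plus with Rplus. lra.
Qed.

(* The normal part of d/deps k_{s^j} under the dilation: the dilation contributes
   -(j+1) k_{s^j}, its tangential component q tau contributes q k_{s^{j+1}}. *)
Definition normal_variation (j : nat) t := - INR (S j) * ks j t - q t * ks (S j) t.

Lemma curve_poly_normal_variation j : curve_poly (normal_variation j).
Proof. unfold normal_variation. auto with curve_poly. Qed.

Local Hint Resolve curve_poly_normal_variation : curve_poly.

Lemma normal_variation_0 t : normal_variation 0 t = ds (ds p) t + k t ^ 2 * p t.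
Proof.
  rewrite (d_s_ext gx gy (ds p) (fun u => - k u * q u) d_s_normal_coord).
  rewrite d_s_mult, d_s_opp, d_s_tangent_coord;
    auto using ex_derive_opp, curve_poly_ex_derive with curve_poly.
  unfold normal_variation. change (ds k t) with (ks 1 t). change (ks 0 t) with (k t).
  simpl. ring.
Qed.

Lemma normal_variation_S j t :
  normal_variation (S j) t = ds (normal_variation j) t + k t * p t * ks (S j) t.
Proof.
  unfold normal_variation at 2.
  rewrite d_s_minus, d_s_scal, d_s_mult, d_s_tangent_coord;
    auto using ex_derive_scal, curve_poly_ex_derive with curve_poly.
  unfold normal_variation. change (ds (ks ?i) t) with (ks (S i) t).
  rewrite (S_INR (S j)). ring.
Qed.

Definition mixed_integral a b := integral (fun t => k t * p t * ks a t * ks b t).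

Lemma int_k_s_normal_variation j n :
  integral (fun t => ks n t * normal_variation j t) =
    sum_f_R0 (fun i => (-1) ^ i * mixed_integral (n + i) (j - i)) j
    + (-1) ^ j * integral (fun t => ks (n + j + 2) t * p t).
Proof.
  revert n. induction j as [|j IH]; intro n.
  - rewrite (int_ds_ext _ _ _ _
      (fun t => ks n t * d_s_n gx gy 2 p t + k t * p t * ks (n + 0) t * ks 0 t))
      by (intro t; rewrite normal_variation_0, Nat.add_0_r; change (ks 0 t) with (k t);
            change (d_s_n gx gy 2 p t) with (ds (ds p) t); ring).
    rewrite int_ds_plus, int_ds_by_parts_n by auto with curve_poly.
    unfold mixed_integral, k_s. rewrite <- d_s_n_add, (Nat.add_comm 2 n).
    simpl. rewrite Nat.add_0_r. ring.
  - rewrite (int_ds_ext _ _ _ _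
      (fun t => ks n t * ds (normal_variation j) t + k t * p t * ks (n + 0) t * ks (S j - 0) t))
      by (intro t; rewrite normal_variation_S, Nat.add_0_r, Nat.sub_0_r; ring).
    rewrite int_ds_plus, int_ds_by_parts by auto with curve_poly.
    change (ds (ks n)) with (ks (S n)). rewrite IH.
    rewrite (decomp_sum _ (S j)) by lia. simpl pred.
    replace (n + S j + 2)%nat with (S n + j + 2)%nat by lia.
    rewrite (sum_eq (fun i => (-1) ^ S i * mixed_integral (n + S i) (S j - S i))
                    (fun i => (-1) ^ i * mixed_integral (S n + i) (j - i) * -1))
      by (intros i _; replace (n + S i)%nat with (S n + i)%nat by lia; simpl; ring).
    rewrite <- scal_sum. simpl pow. unfold mixed_integral. ring.
Qed.

Lemma int_k_s_normal_variation_diag m :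
  integral (fun t => ks m t * normal_variation m t) =
    - (INR m + / 2) * integral (fun t => ks m t ^ 2) + / 2 * mixed_integral m m.
Proof.
  set (X := integral (fun t => ks m t * q t * ks (S m) t)).
  assert (by_parts := int_ds_by_parts (fun t => ks m t * q t) (ks m)
                        ltac:(auto with curve_poly) ltac:(auto with curve_poly)).
  change (ds (ks m)) with (ks (S m)) in by_parts. cbv beta in by_parts. fold X in by_parts.
  rewrite (int_ds_ext _ _ _ _
    (fun t => ks m t * q t * ks (S m) t + ks m t ^ 2 + k t * p t * ks m t * ks m t))
    in by_parts.
  2:{ intro t.
      rewrite d_s_mult, d_s_tangent_coord by auto using curve_poly_ex_derive with curve_poly.
      change (ds (ks m) t) with (ks (S m) t). ring. }
  rewrite !int_ds_plus in by_parts by auto with curve_poly. fold X in by_parts.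
  rewrite (int_ds_ext _ _ _ _
    (fun t => - INR (S m) * ks m t ^ 2 + -1 * (ks m t * q t * ks (S m) t)))
    by (intro t; unfold normal_variation; ring).
  rewrite int_ds_plus, !int_ds_scal by auto with curve_poly. fold X.
  unfold mixed_integral in *. rewrite S_INR. lra.
Qed.

Lemma int_Kop_normal_coord m : (1 <= m)%nat ->
  integral (fun t => Kop gx gy m t * p t) =
    - (-1) ^ m * integral (fun t => ks (m + m + 2) t * p t) + / 2 * mixed_integral m m
    - sum_f_R0 (fun i => (-1) ^ i * mixed_integral (m + i) (m - i)) m.
Proof.
  intros Hm.
  (* Needs m >= 1: by truncated subtraction, [sum_f 1 0] is the r = 1 term, not 0. *)
  set (term i t := k t * p t * ks (m + S i) t * ks (m - S i) t).
  rewrite (int_ds_ext _ _ _ _ (fun t =>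
      - (-1) ^ m * (ks (m + m + 2) t * p t) + - / 2 * (k t * p t * ks m t * ks m t)
      + sum_f_R0 (fun i => (-1) ^ i * term i t) (pred m))).
  2:{ intro t. unfold Kop, sum_f. rewrite Nat.sub_1_r.
      replace (2 * m + 2)%nat with (m + m + 2)%nat by lia.
      rewrite scal_sum, !Rmult_plus_distr_r, (Rmult_comm (sum_f_R0 _ _)), scal_sum.
      rewrite (sum_eq _ (fun i => (-1) ^ i * term i t)).
      - rewrite pow_add. ring.
      - intros i _. unfold term. rewrite !Nat.add_1_r. simpl pow. ring. }
  rewrite !int_ds_plus, !int_ds_scal, int_ds_sum by (unfold term; auto 8 with curve_poly).
  rewrite (decomp_sum _ m) by lia.
  rewrite (sum_eq (fun i => integral (fun t => (-1) ^ i * term i t))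
                  (fun i => (-1) ^ S i * mixed_integral (m + S i) (m - S i) * -1)).
  2:{ intros i _. rewrite int_ds_scal by (unfold term; auto 8 with curve_poly).
      unfold mixed_integral, term. simpl. ring. }
  rewrite <- scal_sum, Nat.add_0_r, Nat.sub_0_r. unfold mixed_integral. simpl pow. lra.
Qed.

Lemma curve_poly_Kop m : curve_poly (Kop gx gy m).
Proof. unfold Kop, sum_f. auto 8 with curve_poly. Qed.

Lemma length_pos : 0 < length gx gy T.
Proof.
  apply RInt_gt_0; [lra | intros; apply speed_pos |].
  intros; apply curve_poly_continuous, curve_poly_speed.
Qed.

Lemma int_ds_normal_coord_sqr_le : integral (fun t => p t ^ 2) <= length gx gy T ^ 3.
Proof.
  replace (length gx gy T ^ 3) with (length gx gy T ^ 2 * length gx gy T) by ring.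
  rewrite <- int_ds_const. apply int_ds_le; auto with curve_poly.
  intros t Ht. rewrite <- (pow2_abs (p t)).
  pose proof (Rabs_pos (p t)). pose proof (abs_normal_coord_le t Ht).
  apply pow_incr. lra.
Qed.

Lemma int_Kop_normal_coord_energy m : (1 <= m)%nat ->
  integral (fun t => Kop gx gy m t * p t) = INR (2 * m + 1) * energy gx gy T m.
Proof.
  intros Hm.
  pose proof (int_k_s_normal_variation m m) as Hvar.
  rewrite int_k_s_normal_variation_diag in Hvar.
  rewrite int_Kop_normal_coord by exact Hm.
  unfold energy. rewrite plus_INR, mult_INR, INR_1. replace (INR 2) with 2 by reflexivity.
  lra.
Qed.

Lemma energy_le_Kop_norm m : (1 <= m)%nat ->
  energy gx gy T m <=
    / INR (2 * m + 1) * Rpower (length gx gy T) (3 / 2) * L2norm gx gy T (Kop gx gy m).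
Proof.
  intros Hm.
  assert (Hn : 0 < INR (2 * m + 1)) by (apply lt_0_INR; lia).
  assert (Henergy : energy gx gy T m =
                      / INR (2 * m + 1) * integral (fun t => Kop gx gy m t * p t))
    by (rewrite int_Kop_normal_coord_energy by exact Hm; field; lra).
  assert (HCS := int_ds_cauchy_schwarz (Kop gx gy m) p
                   (curve_poly_Kop m) curve_poly_normal_coord).
  assert (Hp : sqrt (integral (fun t => p t ^ 2)) <= Rpower (length gx gy T) (3 / 2)).
  { rewrite <- sqrt_pow3 by exact length_pos. apply sqrt_le_1_alt, int_ds_normal_coord_sqr_le. }
  rewrite Henergy, Rmult_assoc. apply Rmult_le_compat_l; [left; now apply Rinv_0_lt_compat |].
  unfold L2norm. rewrite Rmult_comm.
  eapply Rle_trans; [exact HCS |].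
  apply Rmult_le_compat_l; [apply sqrt_pos | exact Hp].
Qed.

End ClosedCurve.

Theorem mainTheorem6 (m : nat) (gx gy : R -> R) (T : R) :
  (1 <= m)%nat ->
  closed_immersed_smooth_curve gx gy T ->
  energy gx gy T m <=
    / INR (2 * m + 1) * Rpower (length gx gy T) (3 / 2)
    * L2norm gx gy T (Kop gx gy m).
Proof.
  intros Hm [HT [Hx [Hy [Hper Hsp]]]].
  now apply energy_le_Kop_norm.
Qed.
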